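(* Let $G$ be a finitely generated group satisfying the Morse local-to-global property. Then the Morse boundary $\partial_* G$ is strongly $\sigma$-compact.
   Context: A Morse gauge is a non-decreasing continuous function $M:\mathbb{R}_{\geq 1}\to\mathbb{R}_{\geq 0}$. A continuous map $\gamma:I\to X$ is a $Q$--quasi-geodesic ($Q\ge 1$) if $|t-s|/Q-Q\le d(\gamma(s),\gamma(t))\le Q|t-s|+Q$ for all $s,t\in I$. A quasi-geodesic $\gamma$ is $M$--Morse if every $Q$--quasi-geodesic with endpoints $\gamma(s),\gamma(t)$ lies in the closed $M(Q)$--neighbourhood of $\gamma[s,t]$; it is Morse if it is $M$--Morse for some Morse gauge $M$. For a proper geodesic metric space $X$ with basepoint $x_0$, the Morse boundary $\partial_*X$ is the set of Morse geodesic rays (based at $x_0$) up to bounded Hausdorff distance, with the topology of Cordes; for a Morse gauge $M$, the $M$--stratum $\partial^M_{x_0}X$ is the subset of classes represented by $M$--Morse geodesic rays starting at $x_0$. For a finitely generated group $G$, $\partial_*G$ is the Morse boundary of a Cayley graph (a quasi-isometry invariant). $\partial_*X$ is strongly $\sigma$-compact if there is an increasing sequence of Morse gauges $(M_n)_{n\in\mathbb{N}}$ with $\partial_*X=\bigcup_n\partial^{M_n}_{x_0}X$ and such that for every Morse gauge $M$ there is $n$ with $\partial^{M}_{x_0}X\subset\partial^{M_n}_{x_0}X$. A path $p:I\to X$ is $L$--locally an $M$--Morse $Q$--quasi-geodesic if for all $s,t\in I$ with $|t-s|\le L$ the subpath $p[s,t]$ is an $M$--Morse $Q$--quasi-geodesic.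 A space $X$ has the Morse local-to-global (MLTG) property if for every $Q\ge1$ and Morse gauge $M$ there exist a scale $L$, a constant $Q'\ge 1$ and a Morse gauge $M'$ such that every path that is $L$--locally an $M$--Morse $Q$--quasi-geodesic is an $M'$--Morse $Q'$--quasi-geodesic. A finitely generated group has the MLTG property if its Cayley graph with respect to a finite generating set does. *)

From Stdlib Require Import Reals Lra List Classical ClassicalEpsilon.
Open Scope R_scope.
Set Implicit Arguments.

Record group := Group {
  gT :> Type;
  gmul : gT -> gT -> gT;
  ginv : gT -> gT;
  gone : gT;
  gmulA : forall x y z, gmul x (gmul y z) = gmul (gmul x y) z;
  gmul1 : forall x, gmul gone x = x;
  gmulV : forall x, gmul (ginv x) x = gone
}.

Section Words.
Variable G : group.
Variable S : list G.

Definition letter (x : G) : Prop := In x S \/ In (ginv G x) S.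
Definition evalw (w : list G) : G := fold_right (gmul G) (gone G) w.

Definition generates : Prop :=
  forall g : G, exists w, Forall letter w /\ g = evalw w.

Definition wordle (a b : G) (n : nat) : Prop :=
  exists w, length w = n /\ Forall letter w /\ gmul G a (evalw w) = b.

Definition wdist (a b : G) : nat :=
  epsilon (inhabits 0%nat)
    (fun n => wordle a b n /\ forall m, wordle a b m -> (n <= m)%nat).
Definition dw (a b : G) : R := INR (wdist a b).

Definition adj (g h : G) : Prop :=
  g <> h /\ (In (gmul G (ginv G g) h) S \/ In (gmul G (ginv G h) g) S).

(* Geometric realisation of the Cayley graph: a vertex, or an interior
   point of the edge {g,h} at distance t from g.  The point Edge g h t
   and Edge h g (1-t) are the same point; this is encoded by their
   distance being 0 (we work with the induced pseudometric, and all
   notions below only depend on distances). *)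
Inductive cpt := Vert (g : G) | Edge (g h : G) (t : R).

Definition cwf (p : cpt) : Prop :=
  match p with
  | Vert _ => True
  | Edge g h t => adj g h /\ 0 < t < 1
  end.

Definition cay_pt := {p : cpt | cwf p}.

(* path metric of the metric graph with unit-length edges *)
Definition cay_d0 (p q : cpt) : R :=
  match p, q with
  | Vert g, Vert h => dw g h
  | Vert g, Edge h k u => Rmin (dw g h + u) (dw g k + (1 - u))
  | Edge g h t, Vert k => Rmin (t + dw g k) ((1 - t) + dw h k)
  | Edge g h t, Edge g' h' u =>
      let base := Rmin (Rmin (t + dw g g' + u) (t + dw g h' + (1 - u)))
                       (Rmin ((1 - t) + dw h g' + u) ((1 - t) + dw h h' + (1 - u))) in
      if excluded_middle_informative (g = g' /\ h = h') then Rmin base (Rabs (t - u))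
      else if excluded_middle_informative (g = h' /\ h = g') then Rmin base (Rabs (t - (1 - u)))
      else base
  end.

Definition cay_d (p q : cay_pt) : R := cay_d0 (proj1_sig p) (proj1_sig q).

Definition cay_base : cay_pt := exist cwf (Vert (gone G)) I.

End Words.

Section Morse.
Variable X : Type.
Variable d : X -> X -> R.

Definition interval (I : R -> Prop) : Prop :=
  forall a b c, I a -> I c -> a <= b <= c -> I b.

Definition cc (a b : R) : R -> Prop := fun x => a <= x <= b.
Definition ray_dom : R -> Prop := fun x => 0 <= x.

Definition cont_on (I : R -> Prop) (p : R -> X) : Prop :=
  forall t, I t -> forall eps, 0 < eps -> exists delta, 0 < delta /\
    forall s, I s -> Rabs (s - t) < delta -> d (p s) (p t) < eps.

Definition qgeod (Q : R) (I : R -> Prop) (p : R -> X) : Prop :=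
  1 <= Q /\ cont_on I p /\
  forall s t, I s -> I t ->
    Rabs (t - s) / Q - Q <= d (p s) (p t) <= Q * Rabs (t - s) + Q.

Definition morse_gauge (M : R -> R) : Prop :=
  (forall x y, 1 <= x -> x <= y -> M x <= M y) /\
  (forall x, 1 <= x -> 0 <= M x) /\
  (forall x, 1 <= x -> forall eps, 0 < eps -> exists delta, 0 < delta /\
     forall y, 1 <= y -> Rabs (y - x) < delta -> Rabs (M y - M x) < eps).

Definition morse_cond (M : R -> R) (I : R -> Prop) (gam : R -> X) : Prop :=
  forall s t, I s -> I t -> s <= t ->
  forall (Q a b : R) (sig : R -> X), a <= b -> qgeod Q (cc a b) sig ->
    d (sig a) (gam s) = 0 -> d (sig b) (gam t) = 0 ->
    forall u, a <= u <= b ->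
      forall eps, 0 < eps -> exists r, s <= r <= t /\ d (sig u) (gam r) <= M Q + eps.

Definition morse_qgeod (M : R -> R) (Q : R) (I : R -> Prop) (p : R -> X) : Prop :=
  qgeod Q I p /\ morse_cond M I p.

Definition locally_morse_qgeod (L : R) (M : R -> R) (Q : R) (I : R -> Prop)
    (p : R -> X) : Prop :=
  forall s t, I s -> I t -> s <= t -> t - s <= L -> morse_qgeod M Q (cc s t) p.

Definition MLTG : Prop :=
  forall (Q : R) (M : R -> R), 1 <= Q -> morse_gauge M ->
  exists (L Q' : R) (M' : R -> R), 0 < L /\ 1 <= Q' /\ morse_gauge M' /\
    forall (I : R -> Prop) (p : R -> X), interval I ->
      locally_morse_qgeod L M Q I p -> morse_qgeod M' Q' I p.

Definition geod_ray (x0 : X) (gam : R -> X) : Prop :=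
  d (gam 0) x0 = 0 /\
  forall s t, 0 <= s -> 0 <= t -> d (gam s) (gam t) = Rabs (t - s).

Definition morse_ray (x0 : X) (gam : R -> X) : Prop :=
  geod_ray x0 gam /\ exists M, morse_gauge M /\ morse_cond M ray_dom gam.

Definition bdd_hausdorff (g1 g2 : R -> X) : Prop :=
  exists C, (forall s, 0 <= s -> exists t, 0 <= t /\ d (g1 s) (g2 t) <= C) /\
            (forall t, 0 <= t -> exists s, 0 <= s /\ d (g1 s) (g2 t) <= C).

(* the class of gam lies in the M-stratum of the Morse boundary *)
Definition in_stratum (x0 : X) (M : R -> R) (gam : R -> X) : Prop :=
  exists gam', geod_ray x0 gam' /\ morse_cond M ray_dom gam' /\ bdd_hausdorff gam gam'.

Definition strongly_sigma_compact (x0 : X) : Prop :=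
  exists Ms : nat -> R -> R,
    (forall n, morse_gauge (Ms n)) /\
    (forall n x, 1 <= x -> Ms n x <= Ms (S n) x) /\
    (forall gam, morse_ray x0 gam -> exists n, in_stratum x0 (Ms n) gam) /\
    (forall M, morse_gauge M -> exists n, forall gam, morse_ray x0 gam ->
        in_stratum x0 M gam -> in_stratum x0 (Ms n) gam).

End Morse.

From Stdlib Require Import Reals ZArith List Lra Lia Classical ClassicalEpsilon Wf_nat.
From mathcomp Require choice.

(* MLTG turns, for each gauge M, L-locally M-Morse geodesic rays into M'-Morse ones.
   Along a geodesic ray of the Cayley graph, the piece over a window [n, n + k] is
   determined up to left translation by the k generators read along it (its window
   type).  A ray all of whose window types (k > L) also occur in M-Morse rays is
   therefore L-locally M-Morse, hence M'-Morse.  Attach to each of the countably many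
   pairs (k, A), A a finite set of window types, a gauge uniform over the rays whose
   window types all lie in A; the running maxima of these gauges work, since all
   M-Morse rays belong to the pair formed by k and the window types of M-Morse rays. *)

Open Scope R_scope.

Module WindowIndex.
Import choice.

Definition decode (n : nat) : nat * list (list nat) :=
  match unpickle n with Some j => j | None => (0%nat, nil) end.

Lemma decode_surj (j : nat * list (list nat)) : exists n, decode n = j.
Proof. exists (pickle j). unfold decode. rewrite pickleK. reflexivity. Qed.

End WindowIndex.

Section GroupLemmas.
Context {G : group}.
Local Notation mul := (gmul G).
Local Notation inv := (ginv G).
Local Notation one := (gone G).

Lemma grp_mulgI (x y z : G) : mul x y = mul x z -> y = z.
Proof.
  intro E. rewrite <- (gmul1 G y), <- (gmul1 G z), <- (gmulV G x), <- !gmulA, E.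
  reflexivity.
Qed.

Lemma grp_mulg1 (x : G) : mul x one = x.
Proof. apply (grp_mulgI (inv x)). rewrite gmulA, gmulV, gmul1. reflexivity. Qed.

Lemma grp_mulgV (x : G) : mul x (inv x) = one.
Proof. apply (grp_mulgI (inv x)). rewrite gmulA, gmulV, gmul1, grp_mulg1. reflexivity. Qed.

Lemma grp_invgK (x : G) : inv (inv x) = x.
Proof. apply (grp_mulgI (inv x)). rewrite gmulV, grp_mulgV. reflexivity. Qed.

Lemma grp_mulKg (x y : G) : mul (inv x) (mul x y) = y.
Proof. rewrite gmulA, gmulV, gmul1. reflexivity. Qed.

Lemma grp_mulKVg (x y : G) : mul x (mul (inv x) y) = y.
Proof. rewrite gmulA, grp_mulgV, gmul1. reflexivity. Qed.

Lemma grp_invMg (x y : G) : inv (mul x y) = mul (inv y) (inv x).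
Proof.
  apply (grp_mulgI (mul x y)).
  rewrite grp_mulgV, <- gmulA, grp_mulKVg, grp_mulgV. reflexivity.
Qed.

End GroupLemmas.

Lemma Rmin_eq_cases (a b c : R) : Rmin a b = c -> a = c \/ b = c.
Proof. unfold Rmin. destruct (Rle_dec a b); auto. Qed.

Lemma Rmax_dist_lt (a b c d eps : R) :
  Rabs (a - c) < eps -> Rabs (b - d) < eps -> Rabs (Rmax a b - Rmax c d) < eps.
Proof.
  intros Hac Hbd. apply Rabs_def2 in Hac. apply Rabs_def2 in Hbd.
  unfold Rmax. destruct (Rle_dec a b), (Rle_dec c d); apply Rabs_def1; lra.
Qed.

Lemma INR_plus_frac_neq (a n : nat) (v : R) : 0 < v < 1 -> INR a + v <> INR n.
Proof.
  intros Hv E. destruct (Nat.lt_ge_cases a n) as [H|H].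
  - assert (INR (S a) <= INR n) by (apply le_INR; lia). rewrite S_INR in *. lra.
  - apply le_INR in H. lra.
Qed.

Lemma nat_floor (s : R) : 0 <= s -> exists n : nat, INR n <= s < INR n + 1.
Proof.
  intro Hs. destruct (base_Int_part s) as [B1 B2].
  assert (Hz : (0 <= Int_part s)%Z).
  { assert (-1 < Int_part s)%Z by (apply lt_IZR; lra). lia. }
  exists (Z.to_nat (Int_part s)). rewrite INR_IZR_INZ, Z2Nat.id by exact Hz. lra.
Qed.

Lemma nat_cell (k : nat) (w : R) :
  0 <= w <= INR (S k) -> exists i, (i <= k)%nat /\ INR i <= w <= INR i + 1.
Proof.
  induction k as [|k IH]; intro Hw.
  - exists 0%nat. simpl in *. split; [lia | lra].
  - destruct (Rle_dec w (INR (S k))) as [Hle|Hgt].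
    + destruct IH as [i [Hi Hwi]]; [lra|]. exists i. split; [lia | exact Hwi].
    + exists (S k). rewrite (S_INR (S k)) in Hw. split; [lia | lra].
Qed.

Fixpoint all_words (B k : nat) : list (list nat) :=
  match k with
  | O => nil :: nil
  | S k => flat_map (fun c => map (cons c) (all_words B k)) (seq 0 B)
  end.

Lemma In_all_words (B k : nat) (w : list nat) :
  length w = k -> (forall c, In c w -> (c < B)%nat) -> In w (all_words B k).
Proof.
  revert w. induction k as [|k IH]; intros w Hw Hc.
  - destruct w; [left; reflexivity | discriminate].
  - destruct w as [|c w]; [discriminate|]. simpl. apply in_flat_map. exists c. split.
    + apply in_seq. assert (c < B)%nat by (apply Hc; left; reflexivity). lia.
    + apply in_map, IH; auto. intros c' Hc'. apply Hc. right. exact Hc'.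
Qed.

Section MorseGeneral.
Variables (X : Type) (d : X -> X -> R).

Lemma morse_gauge_cst0 : morse_gauge (fun _ => 0).
Proof.
  repeat split; intros; try lra.
  exists 1. split; [lra|]. intros. rewrite Rminus_0_r, Rabs_R0. assumption.
Qed.

Lemma morse_gauge_max (M1 M2 : R -> R) :
  morse_gauge M1 -> morse_gauge M2 -> morse_gauge (fun x => Rmax (M1 x) (M2 x)).
Proof.
  intros [Mon1 [Pos1 Cont1]] [Mon2 [Pos2 Cont2]]. split; [|split].
  - intros x y Hx Hxy. apply Rmax_lub.
    + apply (Rle_trans _ (M1 y)); [auto | apply Rmax_l].
    + apply (Rle_trans _ (M2 y)); [auto | apply Rmax_r].
  - intros x Hx. apply (Rle_trans _ (M1 x)); [auto | apply Rmax_l].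
  - intros x Hx eps Heps.
    destruct (Cont1 x Hx eps Heps) as [d1 [Hd1 C1]], (Cont2 x Hx eps Heps) as [d2 [Hd2 C2]].
    exists (Rmin d1 d2). split; [apply Rmin_pos; assumption|]. intros y Hy Hyx.
    pose proof (Rmin_l d1 d2). pose proof (Rmin_r d1 d2).
    apply Rmax_dist_lt; [apply C1 | apply C2]; auto; lra.
Qed.

Lemma morse_cond_le (M1 M2 : R -> R) (I : R -> Prop) (gam : R -> X) :
  (forall x, M1 x <= M2 x) -> morse_cond d M1 I gam -> morse_cond d M2 I gam.
Proof.
  intros Hle H s t Is It Hst Q a b sig Hab Hq Ha Hb u Hu eps Heps.
  destruct (H s t Is It Hst Q a b sig Hab Hq Ha Hb u Hu eps Heps) as [r [Hr Hd]].
  exists r. split; [exact Hr|]. pose proof (Hle Q). lra.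
Qed.

Lemma qgeod_ext (Q : R) (I : R -> Prop) (f g : R -> X) :
  (forall s t, d (f s) (f t) = d (g s) (g t)) -> qgeod d Q I g -> qgeod d Q I f.
Proof.
  intros E [HQ [Hcont Hbd]]. split; [exact HQ | split].
  - intros t It eps Heps. destruct (Hcont t It eps Heps) as [del [Hdel Hs]].
    exists del. split; [exact Hdel|]. intros s Is Hst. rewrite E. auto.
  - intros s t Is It. rewrite E. auto.
Qed.

Lemma geod_ray_qgeod1 (x0 : X) (gam : R -> X) (s t : R) :
  geod_ray d x0 gam -> 0 <= s -> qgeod d 1 (cc s t) gam.
Proof.
  intros [_ Hg] Hs. unfold cc. split; [lra | split].
  - intros t0 Ht0 eps Heps. exists eps. split; [exact Heps|]. intros s0 Hs0 Hd.
    rewrite Hg, Rabs_minus_sym by lra. exact Hd.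
  - intros s0 t0 Hs0 Ht0. rewrite Hg by lra. pose proof (Rabs_pos (t0 - s0)).
    unfold Rdiv. rewrite Rinv_1, Rmult_1_r. lra.
Qed.

Lemma morse_ray_in_own_stratum (x0 : X) (gam : R -> X) :
  morse_ray d x0 gam -> exists M, morse_gauge M /\ in_stratum d x0 M gam.
Proof.
  intros [Hg [M [HM Hc]]]. exists M. split; [exact HM|].
  exists gam. split; [exact Hg | split; [exact Hc|]].
  exists 0. split; intros s Hs; exists s; split; auto;
    rewrite (proj2 Hg), Rminus_diag, Rabs_R0 by auto; lra.
Qed.

End MorseGeneral.

Section CayleyGraph.
Variables (G : group) (gens : list G).
Hypothesis Hgen : generates G gens.
Local Notation mul := (gmul G).
Local Notation inv := (ginv G).
Local Notation one := (gone G).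
Local Notation d0 := (cay_d0 gens).
Local Notation dC := (@cay_d G gens).
Local Notation ray := (geod_ray dC (cay_base G gens)).

Lemma wordle_translate (x a b : G) (n : nat) :
  wordle G gens (mul x a) (mul x b) n <-> wordle G gens a b n.
Proof.
  split; intros [w [Hn [Hw E]]]; exists w; repeat split; auto.
  - apply (grp_mulgI x). rewrite gmulA. exact E.
  - rewrite <- gmulA, E. reflexivity.
Qed.

Lemma wdist_spec (a b : G) :
  wordle G gens a b (wdist G gens a b) /\
  forall n, wordle G gens a b n -> (wdist G gens a b <= n)%nat.
Proof.
  unfold wdist. apply epsilon_spec.
  destruct (Hgen (mul (inv a) b)) as [w [Hw E]].
  assert (Hex : exists n, wordle G gens a b n).
  { exists (length w), w. rewrite <- E, grp_mulKVg. auto. }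
  destruct (dec_inh_nat_subset_has_unique_least_element _ (fun n => classic _) Hex)
    as [n [Hn _]].
  exists n. exact Hn.
Qed.

Lemma dw_translate (x a b : G) : dw G gens (mul x a) (mul x b) = dw G gens a b.
Proof.
  unfold dw. f_equal.
  destruct (wdist_spec a b) as [A1 A2], (wdist_spec (mul x a) (mul x b)) as [B1 B2].
  apply Nat.le_antisymm.
  - apply B2, wordle_translate, A1.
  - apply A2, (wordle_translate x), B1.
Qed.

Lemma dw_xx (a : G) : dw G gens a a = 0.
Proof.
  unfold dw. replace (wdist G gens a a) with 0%nat; [reflexivity|].
  symmetry. apply Nat.le_0_r, (proj2 (wdist_spec a a)).
  exists nil. simpl. rewrite grp_mulg1. auto.
Qed.

Lemma dw_ge0 (a b : G) : 0 <= dw G gens a b.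
Proof. apply pos_INR. Qed.

Lemma dw_lt1_eq (a b : G) : dw G gens a b < 1 -> a = b.
Proof.
  unfold dw. intro H.
  assert (H0 : wdist G gens a b = 0%nat).
  { destruct (wdist G gens a b) as [|k]; [reflexivity|].
    rewrite S_INR in H. pose proof (pos_INR k). lra. }
  destruct (wdist_spec a b) as [[w [Hn [_ E]]] _]. rewrite H0 in Hn.
  destruct w; [|discriminate]. simpl in E. rewrite grp_mulg1 in E. exact E.
Qed.

Lemma dw_eq1 (a b : G) : dw G gens a b = 1 -> a <> b /\ letter G gens (mul (inv a) b).
Proof.
  intro H. split.
  - intros <-. rewrite dw_xx in H. lra.
  - unfold dw in H. change 1 with (INR 1) in H. apply INR_eq in H.
    destruct (wdist_spec a b) as [[w [Hn [Hw E]]] _]. rewrite H in Hn.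
    destruct w as [|l [|]]; try discriminate. simpl in E. rewrite grp_mulg1 in E.
    subst b. rewrite grp_mulKg. inversion Hw. assumption.
Qed.

Definition cpt_translate (x : G) (p : cpt G) : cpt G :=
  match p with
  | Vert g => Vert G (mul x g)
  | Edge g h t => Edge G (mul x g) (mul x h) t
  end.

Lemma cpt_translateK (x : G) (p : cpt G) : cpt_translate x (cpt_translate (inv x) p) = p.
Proof. destruct p; simpl; rewrite ?grp_mulKVg; reflexivity. Qed.

Lemma cay_d0_translate (x : G) (p q : cpt G) :
  d0 (cpt_translate x p) (cpt_translate x q) = d0 p q.
Proof.
  assert (Hx : forall a b : G, mul x a = mul x b <-> a = b)
    by (split; [apply grp_mulgI | intros ->; reflexivity]).
  destruct p as [g|g h t], q as [g'|g' h' u]; simpl; rewrite ?dw_translate; try reflexivity.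
  repeat match goal with |- context [excluded_middle_informative ?P] =>
    destruct (excluded_middle_informative P) end;
  first [reflexivity | exfalso; rewrite ?Hx in *; tauto].
Qed.

Lemma cay_d0_translate_l (x : G) (p q : cpt G) :
  d0 (cpt_translate (inv x) p) q = d0 p (cpt_translate x q).
Proof. rewrite <- (cay_d0_translate x), cpt_translateK. reflexivity. Qed.

Lemma cwf_translate (x : G) (p : cpt G) : cwf gens p -> cwf gens (cpt_translate x p).
Proof.
  destruct p as [g|g h t]; simpl; [auto|]. intros [[Hne Hin] Ht]. split; [split|exact Ht].
  - intro E. apply Hne, (grp_mulgI x), E.
  - rewrite !grp_invMg, <- !gmulA, !grp_mulKg. exact Hin.
Qed.

Definition cay_translate (x : G) (p : cay_pt G gens) : cay_pt G gens :=
  exist _ (cpt_translate x (proj1_sig p)) (cwf_translate x _ (proj2_sig p)).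

(* [Edge g h t] and [Edge h g (1 - t)] are different terms for the same point,
   so points are compared through their distances to all other points. *)
Definition same_point (p q : cpt G) : Prop := forall r, d0 r p = d0 r q.

Lemma same_point_edge_reverse (g h : G) (u : R) :
  g <> h -> same_point (Edge G h g (1 - u)) (Edge G g h u).
Proof.
  intros Hgh [a|a b t]; simpl; replace (1 - (1 - u)) with u by ring.
  - apply Rmin_comm.
  - rewrite (Rmin_comm (t + _ + _)), (Rmin_comm (1 - t + _ + _)).
    repeat match goal with |- context [excluded_middle_informative ?P] =>
      destruct (excluded_middle_informative P) end;
    first [reflexivity | exfalso; intuition congruence].
Qed.

Definition edge_point (a b : G) (u : R) : cpt G :=
  if Req_EM_T u 0 then Vert G a else if Req_EM_T u 1 then Vert G b else Edge G a b u.

Lemma cpt_translate_edge_point (x a b : G) (u : R) :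
  cpt_translate x (edge_point a b u) = edge_point (mul x a) (mul x b) u.
Proof. unfold edge_point. destruct (Req_EM_T u 0), (Req_EM_T u 1); reflexivity. Qed.

Lemma cpt_between_adjacent (v v' : G) (p : cpt G) (u : R) :
  cwf gens p -> 0 < u < 1 -> dw G gens v v' = 1 ->
  d0 (Vert G v) p = u -> d0 p (Vert G v') = 1 - u ->
  p = Edge G v v' u \/ p = Edge G v' v (1 - u).
Proof.
  intros Hp Hu Hvv' D1 D2. destruct p as [a|a b w]; simpl in D1, D2.
  { assert (v = a) by (apply dw_lt1_eq; lra). subst a. rewrite dw_xx in D1. lra. }
  destruct Hp as [_ Hw].
  pose proof (dw_ge0 v a). pose proof (dw_ge0 v b).
  pose proof (dw_ge0 a v'). pose proof (dw_ge0 b v').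
  apply Rmin_eq_cases in D1 as [D1|D1].
  - left. assert (v = a) by (apply dw_lt1_eq; lra). subst a.
    rewrite dw_xx in D1. replace w with u in * by lra. rewrite Hvv' in D2.
    apply Rmin_eq_cases in D2 as [D2|D2]; [lra|].
    assert (b = v') by (apply dw_lt1_eq; lra). subst b. reflexivity.
  - right. assert (v = b) by (apply dw_lt1_eq; lra). subst b.
    rewrite dw_xx in D1. replace w with (1 - u) in * by lra. rewrite Hvv' in D2.
    apply Rmin_eq_cases in D2 as [D2|D2]; [|lra].
    assert (a = v') by (apply dw_lt1_eq; lra). subst a. reflexivity.
Qed.

Definition cay_vertex (p : cay_pt G gens) : G :=
  match proj1_sig p with Vert g => g | Edge g _ _ => g end.

Local Notation pt gam t := (proj1_sig (gam t)).
Local Notation vx gam n := (cay_vertex (gam (INR n))).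

Section GeodesicRay.
Variable gam : R -> cay_pt G gens.
Hypothesis Hgam : ray gam.

Lemma ray_dist (s t : R) : 0 <= s -> 0 <= t -> d0 (pt gam s) (pt gam t) = Rabs (t - s).
Proof. apply (proj2 Hgam). Qed.

Lemma ray_start_vertex : exists g, pt gam 0 = Vert G g.
Proof.
  pose proof (proj1 Hgam) as H0. unfold cay_d, cay_base in H0. simpl in H0.
  destruct (gam 0) as [[g|a b t] Hp]; simpl in *; [eauto|]. destruct Hp as [_ Ht].
  pose proof (dw_ge0 a one). pose proof (dw_ge0 b one).
  apply Rmin_eq_cases in H0 as [H0|H0]; lra.
Qed.

Lemma ray_vertex (n : nat) : pt gam (INR n) = Vert G (vx gam n).
Proof.
  destruct ray_start_vertex as [g0 E0].
  pose proof (ray_dist 0 (INR n) (Rle_refl 0) (pos_INR n)) as D.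
  rewrite E0, Rminus_0_r, Rabs_pos_eq in D by apply pos_INR.
  unfold cay_vertex. destruct (gam (INR n)) as [[g|a b t] Hp]; simpl in *; [reflexivity|].
  destruct Hp as [_ Ht]. exfalso. unfold dw in D.
  apply Rmin_eq_cases in D as [D|D].
  - exact (INR_plus_frac_neq (wdist G gens g0 a) n t Ht D).
  - exact (INR_plus_frac_neq (wdist G gens g0 b) n (1 - t) ltac:(lra) D).
Qed.

Lemma ray_step (n : nat) : dw G gens (vx gam n) (vx gam (S n)) = 1.
Proof.
  pose proof (ray_dist (INR n) (INR (S n)) (pos_INR n) (pos_INR _)) as D.
  rewrite (ray_vertex n), (ray_vertex (S n)) in D.
  transitivity (Rabs (INR (S n) - INR n)); [exact D|].
  rewrite S_INR, Rabs_pos_eq; lra.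
Qed.

Lemma ray_edge_point (n : nat) (u : R) :
  0 <= u <= 1 -> same_point (pt gam (INR n + u)) (edge_point (vx gam n) (vx gam (S n)) u).
Proof.
  intros Hu r. unfold edge_point.
  destruct (Req_EM_T u 0) as [->|Hu0].
  { rewrite Rplus_0_r, ray_vertex. reflexivity. }
  destruct (Req_EM_T u 1) as [->|Hu1].
  { rewrite <- S_INR, ray_vertex. reflexivity. }
  pose proof (pos_INR n) as Hn.
  pose proof (ray_dist (INR n) (INR n + u) ltac:(lra) ltac:(lra)) as D1.
  pose proof (ray_dist (INR n + u) (INR (S n)) ltac:(lra) (pos_INR _)) as D2.
  rewrite ray_vertex in D1, D2.
  replace (Rabs (INR n + u - INR n)) with u in D1
    by (replace (INR n + u - INR n) with u by ring; rewrite Rabs_pos_eq; lra).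
  replace (Rabs (INR (S n) - (INR n + u))) with (1 - u) in D2
    by (rewrite S_INR, Rabs_pos_eq; lra).
  destruct (cpt_between_adjacent _ _ _ u (proj2_sig (gam (INR n + u))) ltac:(lra)
              (ray_step n) D1 D2) as [E|E]; rewrite E; [reflexivity|].
  apply same_point_edge_reverse, (proj1 (dw_eq1 _ _ (ray_step n))).
Qed.

End GeodesicRay.

Definition letter_of_index (i : nat) : G :=
  if Nat.ltb i (length gens) then nth i gens one else inv (nth (i - length gens) gens one).

Definition letter_index (l : G) : nat :=
  epsilon (inhabits 0%nat) (fun i => (i < 2 * length gens)%nat /\ letter_of_index i = l).

Lemma letter_index_spec (l : G) : letter G gens l ->
  (letter_index l < 2 * length gens)%nat /\ letter_of_index (letter_index l) = l.
Proof.
  intro Hl. unfold letter_index. apply epsilon_spec. unfold letter_of_index.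
  destruct Hl as [Hl|Hl]; destruct (In_nth _ _ one Hl) as [i [Hi E]].
  - exists i. rewrite (proj2 (Nat.ltb_lt i _) Hi). split; [lia | exact E].
  - exists (length gens + i)%nat. rewrite (proj2 (Nat.ltb_ge _ _)) by lia.
    replace (length gens + i - length gens)%nat with i by lia.
    rewrite E, grp_invgK. split; [lia | reflexivity].
Qed.

Lemma letter_index_inj (l l' : G) :
  letter G gens l -> letter G gens l' -> letter_index l = letter_index l' -> l = l'.
Proof.
  intros Hl Hl' E.
  rewrite <- (proj2 (letter_index_spec l Hl)), <- (proj2 (letter_index_spec l' Hl')), E.
  reflexivity.
Qed.

Definition window_type (gam : R -> cay_pt G gens) (n k : nat) : list nat :=
  map (fun i => letter_index (mul (inv (vx gam (n + i))) (vx gam (S (n + i))))) (seq 0 k).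

Lemma ray_step_letter (gam : R -> cay_pt G gens) (n : nat) :
  ray gam -> letter G gens (mul (inv (vx gam n)) (vx gam (S n))).
Proof. intro Hgam. exact (proj2 (dw_eq1 _ _ (ray_step gam Hgam n))). Qed.

Lemma window_type_in_all_words (gam : R -> cay_pt G gens) (n k : nat) :
  ray gam -> In (window_type gam n k) (all_words (2 * length gens) k).
Proof.
  intro Hgam. apply In_all_words.
  - unfold window_type. rewrite length_map, length_seq. reflexivity.
  - intros c Hc. unfold window_type in Hc. apply in_map_iff in Hc as [i [<- _]].
    apply letter_index_spec, ray_step_letter, Hgam.
Qed.

Lemma window_vertex (gam gam' : R -> cay_pt G gens) (n n' k : nat) :
  ray gam -> ray gam' -> window_type gam n k = window_type gam' n' k ->
  exists x, forall i, (i <= k)%nat -> vx gam (n + i) = mul x (vx gam' (n' + i)).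
Proof.
  intros Hgam Hgam' W. unfold window_type in W. rewrite map_ext_in_iff in W.
  set (x := mul (vx gam n) (inv (vx gam' n'))). exists x.
  induction i as [|i IH]; intro Hi.
  - rewrite !Nat.add_0_r. unfold x. rewrite <- gmulA, gmulV, grp_mulg1. reflexivity.
  - assert (E := W i ltac:(apply in_seq; lia)). cbv beta in E.
    apply letter_index_inj in E; [|apply ray_step_letter; assumption ..].
    rewrite !Nat.add_succ_r, <- (grp_mulKVg (vx gam (n + i)) (vx gam (S (n + i)))).
    rewrite E, IH by lia. rewrite <- gmulA, grp_mulKVg. reflexivity.
Qed.

Lemma window_same_point (gam gam' : R -> cay_pt G gens) (n n' k : nat) :
  ray gam -> ray gam' -> window_type gam n (S k) = window_type gam' n' (S k) ->
  exists x, forall w, 0 <= w <= INR (S k) ->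
    same_point (pt gam (INR n + w)) (cpt_translate x (pt gam' (INR n' + w))).
Proof.
  intros Hgam Hgam' W. destruct (window_vertex _ _ _ _ _ Hgam Hgam' W) as [x Hx].
  exists x. intros w Hw r. destruct (nat_cell k w Hw) as [i [Hi Hwi]].
  replace (INR n + w) with (INR (n + i) + (w - INR i)) by (rewrite plus_INR; ring).
  replace (INR n' + w) with (INR (n' + i) + (w - INR i)) by (rewrite plus_INR; ring).
  rewrite (ray_edge_point gam Hgam (n + i) (w - INR i) ltac:(lra) r).
  rewrite <- cay_d0_translate_l.
  rewrite (ray_edge_point gam' Hgam' (n' + i) (w - INR i) ltac:(lra)).
  rewrite cay_d0_translate_l, cpt_translate_edge_point, <- Hx by lia.
  rewrite <- !Nat.add_succ_r, <- Hx by lia. reflexivity.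
Qed.

Lemma morse_cond_translate (M : R -> R) (gam gam' : R -> cay_pt G gens) (x : G)
    (c lo hi : R) :
  (forall w, lo <= w <= hi -> same_point (pt gam w) (cpt_translate x (pt gam' (w + c)))) ->
  0 <= lo + c -> morse_cond dC M ray_dom gam' ->
  forall s t, lo <= s -> t <= hi -> morse_cond dC M (cc s t) gam.
Proof.
  intros Hsame Hc HM s t Hs Ht s1 t1 Hs1 Ht1 Hst Q a b sig Hab Hq Ha Hb u Hu eps Heps.
  unfold cc in Hs1, Ht1.
  set (sig' := fun v => cay_translate (inv x) (sig v)).
  assert (Hsig' : forall v w, lo <= w <= hi -> dC (sig' v) (gam' (w + c)) = dC (sig v) (gam w)).
  { intros v w Hw. unfold cay_d, sig', cay_translate. simpl.
    rewrite cay_d0_translate_l. symmetry. exact (Hsame w Hw _). }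
  assert (Hq' : qgeod dC Q (cc a b) sig').
  { apply (qgeod_ext _ _ _ _ _ sig); [|exact Hq]. intros v v'. apply cay_d0_translate. }
  destruct (HM (s1 + c) (t1 + c) ltac:(unfold ray_dom; lra) ltac:(unfold ray_dom; lra)
              ltac:(lra) Q a b sig' Hab Hq')
    with (u := u) (eps := eps) as [r [Hr Hd]]; auto.
  - rewrite Hsig' by lra. exact Ha.
  - rewrite Hsig' by lra. exact Hb.
  - exists (r - c). split; [lra|]. rewrite <- Hsig' by lra.
    replace (r - c + c) with r by ring. exact Hd.
Qed.

Lemma locally_morse_of_windows (M : R -> R) (L : R) (k : nat) (gam : R -> cay_pt G gens) :
  ray gam -> L + 1 <= INR (S k) ->
  (forall n, exists gam' n', ray gam' /\ morse_cond dC M ray_dom gam' /\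
               window_type gam' n' (S k) = window_type gam n (S k)) ->
  locally_morse_qgeod dC L M 1 ray_dom gam.
Proof.
  intros Hgam HkL Hwin s t Hs Ht Hst HtL. unfold ray_dom in Hs, Ht.
  split; [exact (geod_ray_qgeod1 _ _ _ _ _ t Hgam Hs)|].
  destruct (nat_floor s Hs) as [n [Hn1 Hn2]].
  destruct (Hwin n) as [gam' [n' [Hgam' [HM W]]]].
  destruct (window_same_point _ _ _ _ _ Hgam Hgam' (eq_sym W)) as [x Hx].
  apply (morse_cond_translate M gam gam' x (INR n' - INR n) (INR n) (INR n + INR (S k)));
    [| pose proof (pos_INR n'); lra | exact HM | lra | lra].
  intros w Hw. replace w with (INR n + (w - INR n)) at 1 by ring.
  replace (w + (INR n' - INR n)) with (INR n' + (w - INR n)) by ring.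
  apply Hx. lra.
Qed.

Definition windows_in (j : nat * list (list nat)) (gam : R -> cay_pt G gens) : Prop :=
  forall n, In (window_type gam n (fst j)) (snd j).

Definition uniform_gauge (j : nat * list (list nat)) (N : R -> R) : Prop :=
  morse_gauge N /\ forall gam, ray gam -> windows_in j gam -> morse_cond dC N ray_dom gam.

Definition gauge_of (j : nat * list (list nat)) : R -> R :=
  epsilon (inhabits (fun _ : R => 0))
    (fun N => morse_gauge N /\ ((exists N', uniform_gauge j N') -> uniform_gauge j N)).

Lemma gauge_of_spec (j : nat * list (list nat)) :
  morse_gauge (gauge_of j) /\ ((exists N, uniform_gauge j N) -> uniform_gauge j (gauge_of j)).
Proof.
  unfold gauge_of. apply epsilon_spec.
  destruct (classic (exists N, uniform_gauge j N)) as [[N HN]|HN].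
  - exists N. split; [apply HN | auto].
  - exists (fun _ => 0). split; [apply morse_gauge_cst0 | tauto].
Qed.

Fixpoint gauge_seq (n : nat) : R -> R :=
  match n with
  | O => gauge_of (WindowIndex.decode 0)
  | S n' => fun x => Rmax (gauge_seq n' x) (gauge_of (WindowIndex.decode (S n')) x)
  end.

Lemma gauge_seq_gauge (n : nat) : morse_gauge (gauge_seq n).
Proof.
  induction n as [|n IH]; simpl.
  - apply (proj1 (gauge_of_spec _)).
  - apply morse_gauge_max; [exact IH | apply (proj1 (gauge_of_spec _))].
Qed.

Lemma gauge_seq_le_succ (n : nat) (x : R) : gauge_seq n x <= gauge_seq (S n) x.
Proof. apply Rmax_l. Qed.

Lemma gauge_of_le_gauge_seq (n : nat) (x : R) :
  gauge_of (WindowIndex.decode n) x <= gauge_seq n x.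
Proof. destruct n; simpl; [apply Rle_refl | apply Rmax_r]. Qed.

Definition window_set (P : list nat -> Prop) (k : nat) : list (list nat) :=
  filter (fun w => if excluded_middle_informative (P w) then true else false)
         (all_words (2 * length gens) k).

Lemma windows_in_window_set (P : list nat -> Prop) (k : nat) (gam : R -> cay_pt G gens) :
  ray gam -> windows_in (k, window_set P k) gam <-> forall n, P (window_type gam n k).
Proof.
  intro Hgam. unfold windows_in, window_set. simpl.
  split; intros H n; specialize (H n).
  - apply filter_In in H as [_ H].
    destruct (excluded_middle_informative _); [assumption | discriminate].
  - apply filter_In. split; [apply window_type_in_all_words, Hgam|].
    destruct (excluded_middle_informative _); [reflexivity | contradiction].
Qed.

Lemma morse_cond_gauge_of (M : R -> R) :
  MLTG dC -> morse_gauge M ->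
  exists j, forall gam, ray gam -> morse_cond dC M ray_dom gam ->
    morse_cond dC (gauge_of j) ray_dom gam.
Proof.
  intros HML HM.
  destruct (HML 1 M (Rle_refl 1) HM) as [L [Q' [M' [HL [_ [HM' Hlg]]]]]].
  destruct (nat_floor (L + 1) ltac:(lra)) as [k [_ Hk]].
  set (P w := exists gam' n', ray gam' /\ morse_cond dC M ray_dom gam' /\
                              window_type gam' n' (S k) = w).
  assert (Hunif : uniform_gauge (S k, window_set P (S k)) M').
  { split; [exact HM'|]. intros gam Hgam Hwin.
    rewrite (windows_in_window_set P (S k) gam Hgam) in Hwin.
    apply (Hlg ray_dom gam); [intros ? ? ? ? ? ?; unfold ray_dom in *; lra|].
    apply (locally_morse_of_windows M L k gam Hgam); [rewrite S_INR; lra | exact Hwin]. }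
  exists (S k, window_set P (S k)). intros gam Hgam HMgam.
  destruct (proj2 (gauge_of_spec _) (ex_intro _ M' Hunif)) as [_ Hof].
  apply Hof; [exact Hgam|].
  apply windows_in_window_set; [exact Hgam|]. intro n. exists gam, n. auto.
Qed.

Lemma in_stratum_gauge_seq (M : R -> R) :
  MLTG dC -> morse_gauge M ->
  exists n, forall gam, in_stratum dC (cay_base G gens) M gam ->
    in_stratum dC (cay_base G gens) (gauge_seq n) gam.
Proof.
  intros HML HM. destruct (morse_cond_gauge_of M HML HM) as [j Hj].
  destruct (WindowIndex.decode_surj j) as [n Hn].
  exists n. intros gam [gam' [Hray [Hcond Hbdd]]].
  exists gam'. split; [exact Hray | split; [|exact Hbdd]].
  apply (morse_cond_le _ _ (gauge_of j)); [|apply Hj; assumption].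
  intro x. rewrite <- Hn. apply gauge_of_le_gauge_seq.
Qed.

End CayleyGraph.

Theorem theorem4p3 (G : group) (S : list G) :
  generates G S ->
  MLTG (@cay_d G S) ->
  strongly_sigma_compact (@cay_d G S) (cay_base G S).
Proof.
  intros Hgen HML. exists (gauge_seq G S). split; [|split; [|split]].
  - apply gauge_seq_gauge.
  - intros n x _. apply gauge_seq_le_succ.
  - intros gam Hgam. destruct (morse_ray_in_own_stratum _ _ _ _ Hgam) as [M [HM Hst]].
    destruct (in_stratum_gauge_seq G S Hgen M HML HM) as [n Hn]. eauto.
  - intros M HM. destruct (in_stratum_gauge_seq G S Hgen M HML HM) as [n Hn]. eauto.
Qed.
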